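(* Let $G_1$ and $G_2$ be two vertex-disjoint finite simple graphs, each having at least one edge. Then $\mathcal{NC}(G_1\sqcup G_2)$ is not shellable, and hence not vertex decomposable.
   Context: For a finite simple graph $H$, the non-cover complex $\mathcal{NC}(H)$ is the simplicial complex whose simplices are the subsets $S\subseteq V(H)$ such that $V(H)\setminus S$ contains both endpoints of some edge of $H$. A simplicial complex $K$ is shellable if its facets (maximal simplices) can be ordered $F_1,\dots,F_t$ so that for each $k=2,\dots,t$ the complex $\big(\bigcup_{j<k}\Delta^{F_j}\big)\cap\Delta^{F_k}$ is pure of dimension $\dim(\Delta^{F_k})-1$, where $\Delta^F$ denotes the full simplex on $F$. For a simplicial complex $K$ and a vertex $v$, $\mathrm{lk}(v,K)=\{\tau\in K: v\notin\tau,\ \tau\cup\{v\}\in K\}$ and $\mathrm{del}(v,K)=\{\tau\in K: v\notin\tau\}$. $K$ is vertex decomposable if $K$ is a simplex (including $\{\emptyset\}$), or $K$ has a vertex $v$ such that $\mathrm{lk}(v,K)$ and $\mathrm{del}(v,K)$ are vertex decomposable and every facet of $\mathrm{del}(v,K)$ is a facet of $K$. *)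

From mathcomp Require Import all_boot.
Set Implicit Arguments. Unset Strict Implicit. Unset Printing Implicit Defensive.

Definition simple_graph (T : finType) (e : rel T) : Prop :=
  symmetric e /\ irreflexive e.

Definition has_edge (T : finType) (e : rel T) : Prop := exists x y, e x y.

Definition sum_rel (T1 T2 : finType) (e1 : rel T1) (e2 : rel T2) : rel (T1 + T2) :=
  fun u v => match u, v with
             | inl a, inl b => e1 a b
             | inr a, inr b => e2 a b
             | _, _ => false
             end.

Definition complex (T : finType) := {set {set T}}.

Definition non_cover_complex (T : finType) (e : rel T) : complex T :=
  [set S : {set T} | [exists x, exists y, [&& e x y, x \notin S & y \notin S]]].

Definition facet (T : finType) (K : complex T) (F : {set T}) : Prop :=
  F \in K /\ forall G, G \in K -> F \subset G -> G = F.

Definition full_simplex (T : finType) (F : {set T}) : complex T := powerset F.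

(* K is pure of dimension d (given as cardinality d+1 = n): every facet has n vertices. *)
Definition pure_card (T : finType) (K : complex T) (n : nat) : Prop :=
  forall F, facet K F -> #|F| = n.

Definition prev_intersection (T : finType) (s : seq {set T}) (k : nat) : complex T :=
  [set t : {set T} | (t \subset nth set0 s k) &&
                     [exists j : 'I_k, t \subset nth set0 s j]].

(* Shellable: an ordering F_1..F_t of all facets (each exactly once) such that for
   k >= 2 the complex (U_{j<k} Delta^{F_j}) cap Delta^{F_k} is pure of dimension
   dim F_k - 1, i.e. all its facets have #|F_k| - 1 vertices (indices 0-based). *)
Definition shellable (T : finType) (K : complex T) : Prop :=
  exists s : seq {set T},
    [/\ uniq s,
        (forall F, F \in s <-> facet K F) &
        forall k, 0 < k < size s ->
          forall G, facet (prev_intersection s k) G ->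
            (#|G|.+1 = #|nth set0 s k|)%N].

Definition link (T : finType) (v : T) (K : complex T) : complex T :=
  [set t in K | (v \notin t) && (v |: t \in K)].

Definition deletion (T : finType) (v : T) (K : complex T) : complex T :=
  [set t in K | v \notin t].

Inductive vertex_decomposable (T : finType) : complex T -> Prop :=
| vd_simplex (F : {set T}) : vertex_decomposable (full_simplex F)
| vd_step (K : complex T) (v : T) :
    [set v] \in K ->
    vertex_decomposable (link v K) ->
    vertex_decomposable (deletion v K) ->
    (forall F, facet (deletion v K) F -> facet K F) ->
    vertex_decomposable K.

(* The facets of NC(H) are exactly the complements V \ {x, y} of the edges xy
   of H.  For H = G1 + G2 they fall into two classes (edges of G1, edges of G2),
   and two facets from different classes meet in a face of codimension 2.
   - Shellability: in any shelling F_0, F_1, ..., let F_k be the first facet not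
     in the class of F_0.  All earlier facets lie in the other class, so every
     F_j :&: F_k (j < k) has codimension 2 in F_k; these are then the facets of
     (U_{j<k} F_j) :&: F_k, which is therefore not of codimension 1.  This is a
     statement about arbitrary complexes whose facets split in this way.
   - Vertex decomposability: for every vertex v there is an edge xy of the other
     component, so v, x, y span only the edge xy.  Then V \ {v, x, y} is a facet
     of the deletion of v without being a facet of NC(H), and NC(H) is not a
     simplex; both obstructions hold for any graph with this property. *)

From mathcomp Require Import all_boot.

Set Implicit Arguments. Unset Strict Implicit. Unset Printing Implicit Defensive.

Section NonCoverFacets.
Variables (T : finType) (e : rel T).
Hypothesis e_irr : irreflexive e.

Lemma edge_complement_face x y : e x y -> ~: [set x; y] \in non_cover_complex e.
Proof.
move=> exy; rewrite inE; apply/existsP; exists x; apply/existsP; exists y.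
by rewrite exy !in_setC !in_set2 !eqxx orbT.
Qed.

Lemma edge_neq x y : e x y -> x != y.
Proof. by move=> exy; apply: contraTneq exy => ->; rewrite e_irr. Qed.

Lemma edge_in_pair p q x y : e p q -> p \in [set x; y] -> q \in [set x; y] ->
  [set x; y] \subset [set p; q].
Proof.
move=> epq; have := edge_neq epq; move=> /[swap] /set2P[]-> /[swap] /set2P[]-> //; rewrite ?eqxx // => _;
by rewrite subUset !sub1set !in_set2 !eqxx ?orbT.
Qed.

(* If a face G contains every vertex outside U and the only edges inside U lie
   in {x, y}, then G avoids x and y: the edge missed by G must be xy. *)
Lemma face_avoids_pair (U G : {set T}) x y :
  G \in non_cover_complex e -> ~: U \subset G ->
  (forall p q, e p q -> p \in U -> q \in U -> p \in [set x; y] /\ q \in [set x; y]) ->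
  [set x; y] \subset ~: G.
Proof.
rewrite inE => /existsP[p /existsP[q /and3P[epq pG qG]]] UG edgesU.
have inU z : z \notin G -> z \in U.
  by apply: contraR => zU; apply: (subsetP UG); rewrite in_setC.
have [px qy] := edgesU _ _ epq (inU _ pG) (inU _ qG).
apply: subset_trans (edge_in_pair epq px qy) _.
by rewrite subUset !sub1set !in_setC pG qG.
Qed.

Lemma non_cover_facetP F :
  facet (non_cover_complex e) F <-> exists x y, e x y /\ F = ~: [set x; y].
Proof.
split.
  case=> FK maxF; move: (FK); rewrite inE => /existsP[x /existsP[y /and3P[exy xF yF]]].
  exists x, y; split=> //; symmetry; apply: maxF; first exact: edge_complement_face.
  by rewrite subsetC subUset !sub1set !in_setC xF yF.
move=> [x [y [exy ->]]]; split; first exact: edge_complement_face.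
move=> G GK sub; apply/eqP; rewrite eqEsubset sub andbT subsetC.
by apply: face_avoids_pair GK sub _.
Qed.

(* The hypothesis on a vertex v that obstructs vertex decomposability: an edge
   xy such that v, x, y span no other edge. *)
Definition isolated_edge (v x y : T) : Prop :=
  [/\ e x y, v \notin [set x; y] & ~~ [|| e v x, e x v, e v y | e y v]].

Lemma isolated_edge_edges v x y : isolated_edge v x y -> forall p q, e p q ->
  p \in v |: [set x; y] -> q \in v |: [set x; y] ->
  p \in [set x; y] /\ q \in [set x; y].
Proof.
move=> [_ _ nadj] p q epq pU qU.
have nonadj z : z \in v |: [set x; y] -> ~~ e v z && ~~ e z v.
  move=> /setU1P[->|/set2P[]->]; rewrite ?e_irr //;
  by move: nadj; rewrite !negb_or => /and4P[? ? ? ?]; apply/andP.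
split; [move: pU | move: qU] => /setU1P[zv|//]; subst v.
  by move: (nonadj _ qU); rewrite epq.
by move: (nonadj _ pU); rewrite epq andbF.
Qed.

Hypothesis far_edge : forall v, exists x y, isolated_edge v x y.

(* NC(e) is not a full simplex: its top face F would miss an edge at some
   vertex p, yet p lies in the face V \ {x, y} of an edge xy avoiding p. *)
Lemma non_cover_not_simplex F : non_cover_complex e <> full_simplex F.
Proof.
move=> KF; have : F \in non_cover_complex e by rewrite KF /full_simplex powersetE.
rewrite inE => /existsP[p /existsP[q /and3P[_ pF _]]].
have [x [y [exy px _]]] := far_edge p.
have := edge_complement_face exy; rewrite KF /full_simplex powersetE.
by move=> /subsetP/(_ p); rewrite in_setC px (negbTE pF) => /(_ isT).
Qed.

(* Removing any vertex v creates a facet V \ {v, x, y} of the deletion that is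
   not a facet of NC(e), since it lies in the facet V \ {x, y}. *)
Lemma deletion_new_facet v :
  exists F, facet (deletion v (non_cover_complex e)) F /\ ~ facet (non_cover_complex e) F.
Proof.
have [x [y isol]] := far_edge v; have [exy vxy _] := isol.
have sub : ~: (v |: [set x; y]) \subset ~: [set x; y] by rewrite setCS subsetUr.
exists (~: (v |: [set x; y])); split.
  split.
    rewrite inE in_setC setU11 andbT inE; apply/existsP; exists x; apply/existsP; exists y.
    by rewrite exy !in_setC !in_setU1 !in_set1 !eqxx !orbT.
  move=> G; rewrite inE => /andP[GK vG] tG; apply/eqP; rewrite eqEsubset tG andbT.
  have xyG := face_avoids_pair GK tG (isolated_edge_edges isol).
  by rewrite subsetC subUset sub1set in_setC vG.
move=> [_ maxF]; have /setP/(_ v) := maxF _ (edge_complement_face exy) sub.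
by rewrite !in_setC setU11 (negbTE vxy).
Qed.

Lemma non_cover_not_vd : ~ vertex_decomposable (non_cover_complex e).
Proof.
move=> VD; case E: _ / VD => [F|K v _ _ _ facets].
  exact: non_cover_not_simplex E.
subst K; have [F [delF notF]] := deletion_new_facet v; exact/notF/facets.
Qed.

End NonCoverFacets.

Section TwoClassShelling.
Variable T : finType.

Lemma prev_intersection_facet (s : seq {set T}) k j : j < k ->
  (forall i, i < k -> #|nth set0 s i :&: nth set0 s k| = #|nth set0 s j :&: nth set0 s k|) ->
  facet (prev_intersection s k) (nth set0 s j :&: nth set0 s k).
Proof.
move=> jk same_card; split.
  by rewrite inE subsetIr; apply/existsP; exists (Ordinal jk); rewrite subsetIl.
move=> G; rewrite inE => /andP[Gk /existsP[i Gi]] jG; apply/eqP.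
rewrite eq_sym eqEcard jG -(same_card i (ltn_ord i)) subset_leq_card //.
by rewrite subsetI Gi Gk.
Qed.

(* A complex whose facets split into two nonempty classes, any two facets of
   different classes meeting in codimension 2, is not shellable: at the first
   facet F_k of a shelling leaving the class of F_0, the complex
   (U_{i<k} F_i) :&: F_k has the facet F_0 :&: F_k of codimension 2. *)
Lemma not_shellable_two_classes (K : complex T) (c : {set T} -> bool) A B :
  facet K A -> facet K B -> c A != c B ->
  (forall F G, facet K F -> facet K G -> c F != c G -> #|F :&: G|.+2 = #|G|) ->
  ~ shellable K.
Proof.
move=> KA KB cAB codim2 [s [_ sK shelling]].
have facet_nth j : j < size s -> facet K (nth set0 s j) by move=> js; apply/sK/mem_nth.
pose P F := c F != c (nth set0 s 0); set k := find P s.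
have hasP : has P s.
  have [cA|ncA] := eqVneq (c A) (c (nth set0 s 0)).
    by apply/hasP; exists B; [apply/sK | rewrite /P -cA eq_sym].
  by apply/hasP; exists A; [apply/sK | rewrite /P].
have ks : k < size s by rewrite -has_find.
have Pk : P (nth set0 s k) := nth_find set0 hasP.
have k_gt0 : 0 < k by rewrite lt0n; apply: contraNneq Pk => ->; rewrite /P eqxx.
have codim2_before i : i < k -> #|nth set0 s i :&: nth set0 s k|.+2 = #|nth set0 s k|.
  move=> ik; have /negPn/eqP ci := before_find set0 ik.
  apply: codim2; [exact/facet_nth/(ltn_trans ik) | exact: facet_nth |].
  by rewrite ci eq_sym.
have F0k_facet : facet (prev_intersection s k) (nth set0 s 0 :&: nth set0 s k).
  apply: (prev_intersection_facet k_gt0) => i ik.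
  by apply/succn_inj/succn_inj; rewrite !codim2_before.
have := shelling k; rewrite k_gt0 ks => /(_ isT _ F0k_facet).
by rewrite -(codim2_before 0 k_gt0) => /succn_inj/n_Sn.
Qed.

End TwoClassShelling.

Lemma card_setCI_pair (T : finType) (A : {set T}) x y : x != y -> x \in A -> y \in A ->
  #|~: [set x; y] :&: A|.+2 = #|A|.
Proof.
move=> xy xA yA; rewrite -(cardsID [set x; y] A).
have -> : A :&: [set x; y] = [set x; y].
  by apply/setIidPr; rewrite subUset !sub1set xA yA.
by rewrite setDE setIC cards2 xy add2n.
Qed.

Section DisjointUnion.
Variables (T1 T2 : finType) (e1 : rel T1) (e2 : rel T2).
Hypotheses (e1_irr : irreflexive e1) (e2_irr : irreflexive e2).

Let e := sum_rel e1 e2.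

Lemma sum_rel_irr : irreflexive e.
Proof. by case=> x /=. Qed.

(* The class of a facet: whether it misses a vertex of the first graph, i.e.
   whether it is the complement of an edge of e1. *)
Definition misses_left (F : {set T1 + T2}) : bool := [exists a : T1, inl a \notin F].

Lemma sum_facet_classes F : facet (non_cover_complex e) F ->
  (exists a b, e1 a b /\ F = ~: [set inl a; inl b]) \/
  (exists c d, e2 c d /\ F = ~: [set inr c; inr d]).
Proof.
move=> /(non_cover_facetP sum_rel_irr) [[x|x] [[y|y] [exy ->]]] //.
  by left; exists x, y.
by right; exists x, y.
Qed.

Lemma misses_left_inl a b : misses_left (~: [set inl a; inl b]).
Proof. by apply/existsP; exists a; rewrite in_setC in_set2 eqxx. Qed.

Lemma misses_left_inr c d : misses_left (~: [set inr c; inr d]) = false.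
Proof. by apply/existsP => -[a]; rewrite in_setC in_set2. Qed.

Lemma sum_facets_codim2 F G :
  facet (non_cover_complex e) F -> facet (non_cover_complex e) G ->
  misses_left F != misses_left G -> #|F :&: G|.+2 = #|G|.
Proof.
move=> /sum_facet_classes [[a [b [eab ->]]]|[a [b [eab ->]]]]
  /sum_facet_classes [[c [d [ecd ->]]]|[c [d [ecd ->]]]];
  rewrite ?misses_left_inl ?misses_left_inr // => _;
  apply: card_setCI_pair; rewrite ?in_setC ?in_set2 //.
- exact: (edge_neq sum_rel_irr (x := inl a) (y := inl b) eab).
- exact: (edge_neq sum_rel_irr (x := inr a) (y := inr b) eab).
Qed.

End DisjointUnion.

Theorem proposition4p4 (T1 T2 : finType) (e1 : rel T1) (e2 : rel T2) :
  simple_graph e1 -> simple_graph e2 ->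
  has_edge e1 -> has_edge e2 ->
  ~ shellable (non_cover_complex (sum_rel e1 e2)) /\
  ~ vertex_decomposable (non_cover_complex (sum_rel e1 e2)).
Proof.
move=> [_ irr1] [_ irr2] [a [b eab]] [c [d ecd]].
have irr := sum_rel_irr irr1 irr2.
have left_facet : facet (non_cover_complex (sum_rel e1 e2)) (~: [set inl a; inl b]).
  by apply/(non_cover_facetP irr); exists (inl a), (inl b).
have right_facet : facet (non_cover_complex (sum_rel e1 e2)) (~: [set inr c; inr d]).
  by apply/(non_cover_facetP irr); exists (inr c), (inr d).
split.
  apply: (not_shellable_two_classes left_facet right_facet _ (sum_facets_codim2 irr1 irr2)).
  by rewrite misses_left_inl misses_left_inr.
(* Each vertex is far from any edge of the other component. *)
apply: non_cover_not_vd => // -[v|v].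
  by exists (inr c), (inr d); split; rewrite //= in_set2.
by exists (inl a), (inl b); split; rewrite //= in_set2.
Qed.
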